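(* For every positive integer $n$, there exists a constant $C_n\le 1$ such that $\prod_{i=1}^n x_i+C_n\in M_{2\lceil n/2\rceil}(g_1,\dots,g_n)$, where $g_i:=x_i(1-x_i)$ for $i=1,\dots,n$.
   Context: $\Sigma[\mathbf{x}]$ denotes the set of sums of squares of real polynomials in $\mathbf{x}=(x_1,\dots,x_n)$. For an integer $r$, the $r$-truncated quadratic module is $M_r(g_1,\dots,g_n):=\{\sigma_0+\sum_{i=1}^n\sigma_i g_i:\ \sigma_i\in\Sigma[\mathbf{x}],\ \deg\sigma_0\le r,\ \deg(\sigma_i g_i)\le r\}$. *)

From mathcomp Require Import all_boot all_order all_algebra.
From mathcomp Require Import reals.
From mathcomp Require Import mpoly.
Set Implicit Arguments. Unset Strict Implicit. Unset Printing Implicit Defensive.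
Import Order.TTheory GRing.Theory Num.Theory.
Local Open Scope ring_scope.

(* total degree of a multivariate polynomial (degree of 0 is taken as 0) *)
Definition tdeg (R : nzRingType) (n : nat) (p : {mpoly R[n]}) : nat :=
  (msize p).-1.

Definition is_sos (R : nzRingType) (n : nat) (p : {mpoly R[n]}) : Prop :=
  exists s : seq {mpoly R[n]}, p = \sum_(q <- s) q ^+ 2.

Definition trunc_qmodule (R : nzRingType) (n : nat) (r : nat)
  (g : 'I_n -> {mpoly R[n]}) (p : {mpoly R[n]}) : Prop :=
  exists (s0 : {mpoly R[n]}) (s : 'I_n -> {mpoly R[n]}),
    [/\ is_sos s0, (tdeg s0 <= r)%N,
        (forall i, is_sos (s i)),
        (forall i, tdeg (s i * g i) <= r)%N &
        p = s0 + \sum_(i < n) s i * g i].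

(* One can take C = 1. Split the variables into two blocks of length at most
   m := ceil(n/2), with products A and B; for h := 1/2,
     A B + 1 = h (A + B)^2 + h (1 - A^2) + h (1 - B^2).
   For a block product P = x_a ... x_(b-1) and Q_k := x_a ... x_(k-1),
   telescoping gives 1 - P^2 = sum_k Q_k^2 (1 - x_k^2), and
   1 - x^2 = (1 - x)^2 + 2 x (1 - x), so
     h (1 - P^2) = sum_k (h (Q_k (1 - x_k))^2 + Q_k^2 g_k),
   where every term has degree at most 2 (b - a) <= 2m. *)
From mathcomp Require Import all_boot all_order all_algebra.
From mathcomp Require Import reals.
From mathcomp Require Import mpoly.
From mathcomp Require Import ring zify.
Set Implicit Arguments. Unset Strict Implicit. Unset Printing Implicit Defensive.
Import Order.TTheory GRing.Theory Num.Theory.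
Local Open Scope ring_scope.

Lemma telescope_prod (S : pzRingType) (f : nat -> S) a b :
  \sum_(a <= i < b) (\prod_(a <= j < i) f j) * (1 - f i)
  = 1 - \prod_(a <= j < b) f j.
Proof.
elim: b => [|b IHb]; first by rewrite !big_geq // subrr.
have [lt_ba | le_ab] := ltnP b a.
  by rewrite !big_geq // subrr.
by rewrite big_nat_recr //= IHb big_nat_recr //= mulrBr mulr1 addrA subrK.
Qed.

Section TotalDegree.
Variables (R : nzRingType) (n : nat).
Implicit Types (p q : {mpoly R[n]}).

Lemma tdegD_le p q : (tdeg (p + q) <= maxn (tdeg p) (tdeg q))%N.
Proof. by rewrite /tdeg; have := msizeD_le p q; lia. Qed.

Lemma tdegN p : tdeg (- p) = tdeg p.
Proof. by rewrite /tdeg msizeN. Qed.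

Lemma tdegC (c : R) : tdeg c%:MP_[n] = 0%N.
Proof. by rewrite /tdeg msizeC; case: (c != 0). Qed.

Lemma tdeg_X (i : 'I_n) : tdeg ('X_i : {mpoly R[n]}) = 1%N.
Proof. by rewrite /tdeg msizeX mdeg1. Qed.

End TotalDegree.

Section TotalDegreeDomain.
Variables (R : idomainType) (n : nat).
Implicit Types (p q : {mpoly R[n]}).

Lemma tdegM_le p q : (tdeg (p * q) <= tdeg p + tdeg q)%N.
Proof.
have [->|nz_p] := eqVneq p 0; first by rewrite mul0r /tdeg msize0.
have [->|nz_q] := eqVneq q 0; first by rewrite mulr0 /tdeg msize0.
rewrite /tdeg msizeM //.
have := msize_mdeg_lt (mlead_supp nz_p); have := msize_mdeg_lt (mlead_supp nz_q).
lia.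
Qed.

Lemma tdeg_exp_le p k : (tdeg (p ^+ k) <= k * tdeg p)%N.
Proof.
elim: k => [|k IHk]; first by rewrite expr0 -mpolyC1 tdegC.
by rewrite exprS (leq_trans (tdegM_le _ _)) // mulSn leq_add2l.
Qed.

Lemma tdeg_prod_le (I : Type) (s : seq I) (P : pred I) (F : I -> {mpoly R[n]}) :
  (tdeg (\prod_(i <- s | P i) F i) <= \sum_(i <- s | P i) tdeg (F i))%N.
Proof.
apply: (big_rec2 (fun k p => tdeg p <= k)%N); first by rewrite -mpolyC1 tdegC.
move=> i k p _ le_pk; rewrite (leq_trans (tdegM_le _ _)) //.
by rewrite leq_add2l.
Qed.

End TotalDegreeDomain.

Section SumsOfSquares.
Variables (n : nat).

Lemma is_sos0 (R : nzRingType) : is_sos (0 : {mpoly R[n]}).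
Proof. by exists [::]; rewrite big_nil. Qed.

Lemma is_sos_sqr (R : nzRingType) (q : {mpoly R[n]}) : is_sos (q ^+ 2).
Proof. by exists [:: q]; rewrite big_seq1. Qed.

Lemma is_sosD (R : nzRingType) (p q : {mpoly R[n]}) :
  is_sos p -> is_sos q -> is_sos (p + q).
Proof. by move=> [s ->] [t ->]; exists (s ++ t); rewrite big_cat. Qed.

Lemma is_sosZ (R : rcfType) (c : R) (p : {mpoly R[n]}) :
  0 <= c -> is_sos p -> is_sos (c%:MP * p).
Proof.
move=> c_ge0 [s ->]; exists [seq (Num.sqrt c)%:MP * q | q <- s].
rewrite big_map mulr_sumr; apply: eq_bigr => q _.
by rewrite exprMn -rmorphXn sqr_sqrtr.
Qed.

End SumsOfSquares.

Section TruncatedQuadraticModule.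
Variables (R : nzRingType) (n r : nat) (g : 'I_n -> {mpoly R[n]}).
Local Notation M := (trunc_qmodule r g).

Lemma trunc_qmodule0 : M 0.
Proof.
exists 0, (fun=> 0); split => [||i|i|]; rewrite ?mul0r ?big1 ?addr0 //.
- exact: is_sos0.
- by rewrite /tdeg msize0.
- exact: is_sos0.
- by rewrite /tdeg msize0.
- by move=> i _; rewrite mul0r.
Qed.

Lemma trunc_qmoduleD p q : M p -> M q -> M (p + q).
Proof.
move=> [s0 [s [sos_s0 deg_s0 sos_s deg_s ->]]].
move=> [t0 [t [sos_t0 deg_t0 sos_t deg_t ->]]].
exists (s0 + t0), (fun i => s i + t i); split.
- exact: is_sosD.
- by rewrite (leq_trans (tdegD_le _ _)) // geq_max deg_s0.
- by move=> i; apply: is_sosD.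
- by move=> i; rewrite mulrDl (leq_trans (tdegD_le _ _)) // geq_max !(deg_s, deg_t).
- by rewrite -addrACA -big_split; congr (_ + _); apply: eq_bigr => i _; rewrite mulrDl.
Qed.

Lemma trunc_qmodule_sum (I : eqType) (s : seq I) (P : pred I) (F : I -> {mpoly R[n]}) :
  (forall i, i \in s -> P i -> M (F i)) -> M (\sum_(i <- s | P i) F i).
Proof.
move=> MF; rewrite big_seq_cond; apply: (big_ind M) => [||i /andP[]].
- exact: trunc_qmodule0.
- exact: trunc_qmoduleD.
- exact: MF.
Qed.

Lemma trunc_qmodule_sos p : is_sos p -> (tdeg p <= r)%N -> M p.
Proof.
move=> sos_p deg_p; exists p, (fun=> 0); split => [||i|i|] //.
- exact: is_sos0.
- by rewrite mul0r /tdeg msize0.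
- by rewrite big1 ?addr0 // => i _; rewrite mul0r.
Qed.

Lemma trunc_qmodule_gen p i : is_sos p -> (tdeg (p * g i) <= r)%N -> M (p * g i).
Proof.
move=> sos_p deg_pg; exists 0, (fun j => if j == i then p else 0).
split => [||j|j|].
- exact: is_sos0.
- by rewrite /tdeg msize0.
- by case: eqP => // _; exact: is_sos0.
- by case: eqP => [->|_] //; rewrite mul0r /tdeg msize0.
- by rewrite add0r (bigD1 i) //= eqxx big1 ?addr0 // => j /negPf ->; rewrite mul0r.
Qed.

End TruncatedQuadraticModule.

Section Blocks.
Variables (R : rcfType) (n r : nat).
Implicit Types (p : {mpoly R[n.+1]}).
Local Notation x j := ('X_(inord j) : {mpoly R[n.+1]}).
Local Notation g := (fun i : 'I_n.+1 => 'X_i * (1 - 'X_i)).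

Lemma tdeg_prodX a b : (tdeg (\prod_(a <= j < b) x j) <= b - a)%N.
Proof.
rewrite (leq_trans (tdeg_prod_le _ _ _)) //.
under eq_bigr do rewrite tdeg_X.
by rewrite sum_nat_const_nat muln1.
Qed.

Lemma tdeg_1BX j : (tdeg (1 - x j) <= 1)%N.
Proof.
by rewrite (leq_trans (tdegD_le _ _)) // tdegN tdeg_X -mpolyC1 tdegC.
Qed.

Lemma mpolyCV2 : (2^-1 : R)%:MP * 2 = 1 :> {mpoly R[n.+1]}.
Proof.
have -> : 2 = (2 : R)%:MP :> {mpoly R[n.+1]} by rewrite rmorph_nat.
by rewrite -rmorphM mulVf ?pnatr_eq0 // mpolyC1.
Qed.

Lemma trunc_qmodule_half_sqr p : (2 * tdeg p <= r)%N ->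
  trunc_qmodule r g ((2^-1 : R)%:MP * p ^+ 2).
Proof.
move=> le_r; apply: trunc_qmodule_sos.
  by apply/is_sosZ/is_sos_sqr; rewrite invr_ge0 ler0n.
by rewrite (leq_trans (tdegM_le _ _)) // tdegC (leq_trans (tdeg_exp_le _ _)).
Qed.

Lemma trunc_qmodule_block a b : (2 * (b - a) <= r)%N ->
  trunc_qmodule r g ((2^-1 : R)%:MP * (1 - (\prod_(a <= j < b) x j) ^+ 2)).
Proof.
move=> le_r; rewrite -prodrXl -telescope_prod mulr_sumr.
apply: trunc_qmodule_sum => k; rewrite mem_index_iota => /andP[le_ak lt_kb] _.
set Q := \prod_(a <= j < k) x j; rewrite prodrXl.
have deg_Q : (tdeg Q <= k - a)%N by apply: tdeg_prodX.
have deg_Q1B : (tdeg (Q * (1 - x k)) <= k - a + 1)%N.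
  exact: leq_trans (tdegM_le _ _) (leq_add deg_Q (tdeg_1BX k)).
have deg_Q2g : (tdeg (Q ^+ 2 * (x k * (1 - x k))) <= 2 * (k - a) + (1 + 1))%N.
  apply: leq_trans (tdegM_le _ _) (leq_add _ _).
    exact: leq_trans (tdeg_exp_le _ _) (leq_mul (leqnn 2) deg_Q).
  by rewrite (leq_trans (tdegM_le _ _)) // tdeg_X leq_add2l tdeg_1BX.
have -> : (2^-1 : R)%:MP * (Q ^+ 2 * (1 - x k ^+ 2))
        = (2^-1 : R)%:MP * (Q * (1 - x k)) ^+ 2
          + (2^-1 : R)%:MP * 2 * (Q ^+ 2 * (x k * (1 - x k))) by ring.
rewrite mpolyCV2 mul1r; apply: trunc_qmoduleD.
- apply: trunc_qmodule_half_sqr.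
  by apply: leq_trans (leq_mul (leqnn 2) deg_Q1B) _; lia.
- apply: trunc_qmodule_gen; first exact: is_sos_sqr.
  by apply: leq_trans deg_Q2g _; lia.
Qed.

End Blocks.

Theorem lemma2 (R : realType) (n : nat) (hn : (0 < n)%N) :
  exists C : R, C <= 1 /\
    trunc_qmodule (2 * ((n + 1) %/ 2))%N
      (fun i : 'I_n => 'X_i * (1 - 'X_i))
      (\prod_(i < n) 'X_i + mpolyC n C).
Proof.
case: n hn => [//|n] _; set m := ((n.+1 + 1) %/ 2)%N.
have le_mn : (m <= n.+1)%N by rewrite /m; lia.
pose A := \prod_(0 <= j < m) ('X_(inord j) : {mpoly R[n.+1]}).
pose B := \prod_(m <= j < n.+1) ('X_(inord j) : {mpoly R[n.+1]}).
have -> : \prod_(i < n.+1) 'X_i = A * B.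
  rewrite -big_cat_nat //= big_mkord.
  by apply: eq_bigr => i _; rewrite inord_val.
exists 1; split => //; rewrite mpolyC1.
have -> : A * B + 1 = (2^-1 : R)%:MP * (A + B) ^+ 2
    + (2^-1 : R)%:MP * (1 - A ^+ 2) + (2^-1 : R)%:MP * (1 - B ^+ 2).
  by rewrite -[A * B + 1]mul1r -(mpolyCV2 R n); ring.
apply: trunc_qmoduleD; first apply: trunc_qmoduleD.
- apply: trunc_qmodule_half_sqr.
  apply: leq_trans (leq_mul (leqnn 2) (tdegD_le _ _)) _.
  rewrite leq_mul2l geq_max (leq_trans (tdeg_prodX _ _ _ _)) ?subn0 //=.
  by rewrite (leq_trans (tdeg_prodX _ _ _ _)) // /m; lia.
- by apply: trunc_qmodule_block; lia.
- by apply: trunc_qmodule_block; rewrite /m; lia.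
Qed.
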